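(* Let $(x_t)_{t\in\Omega}$ be a continuous frame for an infinite dimensional Hilbert space $H$. Then there exists $x\in H$ such that $(x_t)_{t\in\Omega}$ does not do stable phase retrieval near $x$. Moreover, the set of $x\in H$ such that $(x_t)_{t\in\Omega}$ does not do stable phase retrieval near $x$ is dense in $H$.
   Context: $H$ is a real or complex Hilbert space. A continuous frame $(x_t)_{t\in\Omega}$ over a measure space $(\Omega,\mu)$ (with $t\mapsto\langle x,x_t\rangle$ measurable for each $x$) satisfies $A\|x\|^2\le\int_\Omega|\langle x,x_t\rangle|^2d\mu\le B\|x\|^2$ for all $x\in H$ with $B\ge A>0$; its analysis operator is $\Theta(x)=(\langle x,x_t\rangle)_{t\in\Omega}\in L_2(\Omega)$, $|\Theta x|=(|\langle x,x_t\rangle|)_{t\in\Omega}$. For $x,y$ with $x\neq\lambda y$ for all scalars $|\lambda|=1$, set $\Psi(x,y)=\||\Theta x|-|\Theta y|\|_{L_2(\Omega)}/\min_{|\lambda|=1}\|x-\lambda y\|$. For $C>0$, the frame does $C$-stable phase retrieval near $x$ if $\liminf_{y\to x,\ y\notin\{\lambda x:|\lambda|=1\}} C\,\Psi(x,y)\ge1$, and does stable phase retrieval near $x$ if this holds for some $C>0$. *)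

From HB Require Import structures.
From mathcomp Require Import all_boot all_order all_algebra.
From mathcomp Require Import all_classical all_reals all_analysis.
From mathcomp Require Import complex.
Set Implicit Arguments. Unset Strict Implicit. Unset Printing Implicit Defensive.
Import Order.TTheory GRing.Theory Num.Theory.
Import numFieldNormedType.Exports.
Local Open Scope classical_set_scope.
Local Open Scope ring_scope.

(* The scalar field is K (= R for real Hilbert spaces,
   = R[i] for complex ones).  [re] : K -> R recovers the real number from a
   real-valued element of K (for K = R: identity; for K = R[i]: Re), [im] the
   imaginary part (for K = R: 0), [conj] the conjugation (for K = R: id).
   Norms in MathComp are K-valued; the real norm of v is [re `|v|]. *)

(* ip is an inner product (linear in the first argument, conjugate
   symmetric) inducing the norm of H. Together with H being a
   completeNormedModType this makes (H, ip) a Hilbert space. *)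
Definition is_inner_product (K : numFieldType) (conj : K -> K)
    (H : normedModType K) (ip : H -> H -> K) : Prop :=
  [/\ forall (a : K) (x y z : H), ip (a *: x + y) z = a * ip x z + ip y z,
      forall x y : H, ip y x = conj (ip x y) &
      forall x : H, ip x x = `|x| ^+ 2].

Definition infinite_dimensional (K : numFieldType) (H : lmodType K) : Prop :=
  forall (n : nat) (e : 'I_n -> H),
    exists x : H, forall c : 'I_n -> K, x <> \sum_(i < n) c i *: e i.

Definition continuous_frame (K : numFieldType) (R : realType)
    (re im : K -> R) (H : normedModType K) (ip : H -> H -> K)
    (d : measure_display) (T : measurableType d)
    (mu : {measure set T -> \bar R}) (xt : T -> H) : Prop :=
  (forall x : H, measurable_fun setT (fun t => re (ip x (xt t))) /\
                 measurable_fun setT (fun t => im (ip x (xt t)))) /\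
  exists A B : R, 0 < A /\ A <= B /\
    forall x : H,
      ((A * (re `|x|) ^+ 2)%:E <=
         \int[mu]_t ((re `|ip x (xt t)|) ^+ 2)%:E)%E /\
      (\int[mu]_t ((re `|ip x (xt t)|) ^+ 2)%:E <=
         (B * (re `|x|) ^+ 2)%:E)%E.

(* min_{|lambda| = 1} ||x - lambda y|| (the minimum is attained, so it
   equals this infimum) *)
Definition phase_dist (K : numFieldType) (R : realType) (re : K -> R)
    (H : normedModType K) (x y : H) : R :=
  inf [set (re `|x - l *: y|) | l in [set l : K | `|l| = 1]].

Definition Psi (K : numFieldType) (R : realType) (re : K -> R)
    (H : normedModType K) (ip : H -> H -> K)
    (d : measure_display) (T : measurableType d)
    (mu : {measure set T -> \bar R}) (xt : T -> H) (x y : H) : \bar R :=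
  (Lnorm mu 2%:E (fun t => (re `|ip x (xt t)| - re `|ip y (xt t)|)%:E)
     * ((phase_dist re x y)^-1)%:E)%E.

Definition punctured_ball (K : numFieldType) (R : realType) (re : K -> R)
    (H : normedModType K) (x : H) (delta : R) : set H :=
  [set y | re `|y - x| < delta /\ ~ (exists l : K, `|l| = 1 /\ y = l *: x)].

(* C-stable phase retrieval near x:
   liminf_{y -> x, y notin {l x : |l|=1}} C Psi(x,y) >= 1, with liminf
   written out as sup_{delta > 0} inf_{y in punctured ball} *)
Definition C_stable_pr_near (K : numFieldType) (R : realType) (re : K -> R)
    (H : normedModType K) (ip : H -> H -> K)
    (d : measure_display) (T : measurableType d)
    (mu : {measure set T -> \bar R}) (xt : T -> H) (C : R) (x : H) : Prop :=
  (1 <= ereal_sup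
          ((fun delta : R =>
              ereal_inf ((fun y : H => (C%:E * Psi re ip mu xt x y)%E)
                           @` punctured_ball re x delta))
           @` [set delta : R | (0 < delta)%R]))%E.

Definition stable_pr_near (K : numFieldType) (R : realType) (re : K -> R)
    (H : normedModType K) (ip : H -> H -> K)
    (d : measure_display) (T : measurableType d)
    (mu : {measure set T -> \bar R}) (xt : T -> H) (x : H) : Prop :=
  exists C : R, 0 < C /\ C_stable_pr_near re ip mu xt C x.

From HB Require Import structures.
From mathcomp Require Import all_boot all_order all_algebra.
From mathcomp Require Import all_classical all_reals all_analysis.
From mathcomp Require Import complex.
From mathcomp Require Import ring lra measurable_realfun.
Import Order.TTheory GRing.Theory Num.Theory.
Import numFieldNormedType.Exports.
Local Open Scope classical_set_scope.
Local Open Scope ring_scope.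
Set Implicit Arguments. Unset Strict Implicit. Unset Printing Implicit Defensive.

(* Perturb any x0 by a fast converging series xstar = x0 + sum_k a_k e_k of
   mutually orthogonal unit vectors, orthogonal to x0 as well.  In infinite
   dimension there are orthonormal sequences, whose frame coefficients tend to
   0 pointwise by Bessel's inequality, so by dominated convergence e_k can be
   chosen with |<e_k, x_t>| and |<w_k, x_t>| / a_k almost disjointly supported
   in L^2 (w_k the k-th partial sum), up to a ratio rho_k -> 0.  Flipping the
   sign of the k-th term gives y_k close to xstar with
   ||xstar - l y_k|| >= a_k for all |l| = 1 (Pythagoras), whereas
   || |Theta xstar| - |Theta y_k| ||_2 = O(a_k rho_k), because
   ||u + v| - |u - v|| <= 2 min(|u|, |v|) for scalars.  Hence
   Psi(xstar, y_k) = O(rho_k) -> 0 along y_k -> xstar. *)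

Lemma addB_scaleB (F : comNzRingType) (V : lmodType F) (w b : V) (l : F) :
  (w + b) - l *: (w - b) = (1 - l) *: w + (1 + l) *: b.
Proof.
rewrite scalerBr opprB scalerBl scalerDl !scale1r addrACA [b + _]addrC.
by rewrite addrACA [l *: b + b]addrC.
Qed.

Lemma min_sqr (F : realDomainType) (u v : F) : 0 <= u -> 0 <= v ->
  Num.min u v ^+ 2 = Num.min (u ^+ 2) (v ^+ 2).
Proof.
move=> u0 v0; have [uv|/ltW vu] := leP u v.
  by rewrite !min_l // ler_sqr.
by rewrite !min_r // ler_sqr.
Qed.

Section ScalarField.
(* [emb] embeds the reals in the scalars: [id] for [R], [r%:C] for [R[i]]. *)
Variables (R : realType) (K : numFieldType) (conj : K -> K) (re : K -> R)
  (emb : R -> K).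
Hypothesis conjD : forall a b, conj (a + b) = conj a + conj b.
Hypothesis conjM : forall a b, conj (a * b) = conj a * conj b.
Hypothesis conjK : forall a, conj (conj a) = a.
Hypothesis conj1 : conj 1 = 1.
Hypothesis mul_conj : forall a, a * conj a = `|a| ^+ 2.
Hypothesis embD : forall r s, emb (r + s) = emb r + emb s.
Hypothesis embM : forall r s, emb (r * s) = emb r * emb s.
Hypothesis emb1 : emb 1 = 1.
Hypothesis embK : forall r, re (emb r) = r.
Hypothesis re_ge0K : forall a : K, 0 <= a -> emb (re a) = a.
Hypothesis ler_emb : forall r s, (emb r <= emb s) = (r <= s).

Lemma conj0 : conj 0 = 0.
Proof. by apply: (addrI (conj 0)); rewrite -conjD !addr0. Qed.

Lemma conjN (a : K) : conj (- a) = - conj a.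
Proof. by apply: (addrI (conj a)); rewrite -conjD !subrr conj0. Qed.

Lemma conj_eq0 (a : K) : (conj a == 0) = (a == 0).
Proof.
apply/eqP/eqP => [h|->]; last exact: conj0.
by rewrite -(conjK a) h conj0.
Qed.

Lemma conj_ge0 (a : K) : 0 <= a -> conj a = a.
Proof.
move=> a0; have [->|an0] := eqVneq a 0; first exact: conj0.
by apply: (mulfI an0); rewrite mul_conj ger0_norm.
Qed.

Lemma norm_conj (a : K) : `|conj a| = `|a|.
Proof. by apply/eqP; rewrite -(@eqrXn2 _ 2) // -!mul_conj conjK mulrC. Qed.

Lemma normB1_normD1 (l : K) : `|1 - l| ^+ 2 + `|1 + l| ^+ 2 = 2 + 2 * `|l| ^+ 2.
Proof.
rewrite -(mul_conj (1 - l)) -(mul_conj (1 + l)) -(mul_conj l) conjD conjN conjD conj1.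
by rewrite !mulrDr !mulrDl !mulNr !mulrN !mul1r !mulr1 opprK; ring.
Qed.

Lemma emb0 : emb 0 = 0.
Proof. by apply: (addrI (emb 0)); rewrite -embD !addr0. Qed.

Lemma embN r : emb (- r) = - emb r.
Proof. by apply: (addrI (emb r)); rewrite -embD !subrr emb0. Qed.

Lemma emb_inj : injective emb.
Proof. by move=> r s h; rewrite -[r]embK h embK. Qed.

Lemma ltr_emb r s : (emb r < emb s) = (r < s).
Proof. by rewrite !lt_neqAle ler_emb (inj_eq emb_inj). Qed.

Lemma emb_ge0 r : (0 <= emb r) = (0 <= r).
Proof. by rewrite -emb0 ler_emb. Qed.

Lemma emb_gt0 r : (0 < emb r) = (0 < r).
Proof. by rewrite -emb0 ltr_emb. Qed.

Lemma embX r n : emb (r ^+ n) = emb r ^+ n.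
Proof. by elim: n => [|n IH]; rewrite ?expr0 ?emb1 // !exprS embM IH. Qed.

Lemma emb_sum (I : Type) (s : seq I) (P : pred I) (F : I -> R) :
  emb (\sum_(i <- s | P i) F i) = \sum_(i <- s | P i) emb (F i).
Proof. exact: (big_morph emb embD emb0). Qed.

Lemma emb_norm r : emb `|r| = `|emb r|.
Proof.
have [r0|r0] := leP 0 r; first by rewrite !ger0_norm ?emb_ge0.
by rewrite !ltr0_norm ?embN // -emb0 ltr_emb.
Qed.

Lemma emb_renorm (a : K) : emb (re `|a|) = `|a|.
Proof. exact: re_ge0K. Qed.

Lemma renorm_ge0 (a : K) : 0 <= re `|a|.
Proof. by rewrite -emb_ge0 emb_renorm. Qed.

Lemma renorm_emb r : re `|emb r| = `|r|.
Proof. by rewrite -emb_norm embK. Qed.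

Lemma renormM (a b : K) : re `|a * b| = re `|a| * re `|b|.
Proof. by apply: emb_inj; rewrite embM !emb_renorm normrM. Qed.

Lemma renormD (a b : K) : re `|a + b| <= re `|a| + re `|b|.
Proof. by rewrite -ler_emb embD !emb_renorm ler_normD. Qed.

Lemma renorm1 : re `|1 : K| = 1.
Proof. by rewrite normr1 -emb1 embK. Qed.

Lemma renorm_addB_le_min (A B : K) :
  `|re `|A + B| - re `|A - B| | <= 2 * Num.min (re `|A|) (re `|B|).
Proof.
have h1 := renormD (A - B) (B + B); have h2 := renormD (A + B) (- (B + B)).
have h3 := renormD (A + A) (- (A - B)); have h4 := renormD (A + A) (- (A + B)).
have hA := renormD A A; have hB := renormD B B.
rewrite !normrN in h2 h3 h4.
have e1 : A - B + (B + B) = A + B by ring.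
have e2 : A + B - (B + B) = A - B by ring.
have e3 : A + A - (A - B) = A + B by ring.
have e4 : A + A - (A + B) = A - B by ring.
rewrite e1 in h1; rewrite e2 in h2; rewrite e3 in h3; rewrite e4 in h4.
rewrite minr_pMr // le_min !ler_norml; lra.
Qed.

Variables (H : completeNormedModType K) (ip : H -> H -> K).
Hypothesis ip_inner : is_inner_product conj ip.

Lemma ipDZl a x y z : ip (a *: x + y) z = a * ip x z + ip y z.
Proof. by case: ip_inner. Qed.

Lemma ipC x y : ip y x = conj (ip x y).
Proof. by case: ip_inner. Qed.

Lemma ipxx x : ip x x = `|x| ^+ 2.
Proof. by case: ip_inner. Qed.

Lemma ip0l z : ip 0 z = 0.
Proof.
have := ipDZl 1 0 0 z; rewrite scaler0 addr0 mul1r => h.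
by apply: (addrI (ip 0 z)); rewrite addr0 -h.
Qed.

Lemma ipDl x y z : ip (x + y) z = ip x z + ip y z.
Proof. by rewrite -[x]scale1r ipDZl mul1r scale1r. Qed.

Lemma ipZl a x z : ip (a *: x) z = a * ip x z.
Proof. by rewrite -[a *: x]addr0 ipDZl ip0l addr0. Qed.

Lemma ipBl x y z : ip (x - y) z = ip x z - ip y z.
Proof. by rewrite ipDl -scaleN1r ipZl mulN1r. Qed.

Lemma ip0r z : ip z 0 = 0.
Proof. by rewrite ipC ip0l conj0. Qed.

Lemma ipDr x y z : ip z (x + y) = ip z x + ip z y.
Proof. by rewrite ipC ipDl conjD -!ipC. Qed.

Lemma ipZr a x z : ip z (a *: x) = conj a * ip z x.
Proof. by rewrite ipC ipZl conjM -ipC. Qed.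

Lemma ipBr x y z : ip z (x - y) = ip z x - ip z y.
Proof. by rewrite ipC ipBl conjD conjN -!ipC. Qed.

Lemma ip_suml (I : Type) (s : seq I) (P : pred I) (F : I -> H) z :
  ip (\sum_(i <- s | P i) F i) z = \sum_(i <- s | P i) ip (F i) z.
Proof. by elim/big_rec2: _ => [|i y1 y2 _ <-]; rewrite ?ip0l ?ipDl. Qed.

Lemma ip_sumr (I : Type) (s : seq I) (P : pred I) (F : I -> H) z :
  ip z (\sum_(i <- s | P i) F i) = \sum_(i <- s | P i) ip z (F i).
Proof. by elim/big_rec2: _ => [|i y1 y2 _ <-]; rewrite ?ip0r ?ipDr. Qed.

Lemma pythagoras x y : ip x y = 0 -> `|x + y| ^+ 2 = `|x| ^+ 2 + `|y| ^+ 2.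
Proof. by move=> xy; rewrite -!ipxx ipDl !ipDr xy (ipC x y) xy conj0 addr0 add0r. Qed.

Definition rnorm (x : H) : R := re `|x|.

Lemma emb_rnorm x : emb (rnorm x) = `|x|.
Proof. exact/re_ge0K/normr_ge0. Qed.

Lemma rnorm_ge0 x : 0 <= rnorm x.
Proof. by rewrite -emb_ge0 emb_rnorm. Qed.

Lemma rnormD x y : rnorm (x + y) <= rnorm x + rnorm y.
Proof. by rewrite -ler_emb embD !emb_rnorm ler_normD. Qed.

Lemma rnormN x : rnorm (- x) = rnorm x.
Proof. by rewrite /rnorm normrN. Qed.

Lemma rnormB x y : rnorm (x - y) <= rnorm x + rnorm y.
Proof. by rewrite -(rnormN y) rnormD. Qed.

Lemma rnormZ a x : rnorm (a *: x) = re `|a| * rnorm x.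
Proof. by apply: emb_inj; rewrite embM !emb_rnorm emb_renorm normrZ. Qed.

Lemma rnorm0 : rnorm 0 = 0.
Proof. by apply: emb_inj; rewrite emb_rnorm normr0 emb0. Qed.

Definition orthonormal (s : seq H) := forall i j, (i < size s)%N -> (j < size s)%N ->
  ip s`_i s`_j = (i == j)%:R.

Lemma orthonormal_rcons s e : orthonormal s -> `|e| = 1 ->
  (forall i, (i < size s)%N -> ip e s`_i = 0) -> orthonormal (rcons s e).
Proof.
move=> os e1 es i j; rewrite size_rcons !ltnS [(i <= _)%N]leq_eqVlt.
rewrite [(j <= _)%N]leq_eqVlt => /orP[/eqP ->|ilt] /orP[/eqP ->|jlt].
- by rewrite !nth_rcons ltnn eqxx ipxx e1 expr1n.
- by rewrite !nth_rcons ltnn eqxx jlt es // (gtn_eqF jlt).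
- by rewrite !nth_rcons ltnn eqxx ilt ipC es // conj0 (ltn_eqF ilt).
- by rewrite !nth_rcons ilt jlt; exact: os.
Qed.

Lemma orthogonal_projection (n : nat) (u : nat -> H) z :
  (forall i j, (i < n)%N -> (j < n)%N -> ip (u i) (u j) = (i == j)%:R) ->
  forall j, (j < n)%N -> ip (z - \sum_(i < n) ip z (u i) *: u i) (u j) = 0.
Proof.
move=> ou j jn; rewrite ipBl ip_suml.
under eq_bigr => i _ do rewrite ipZl (ou i j (ltn_ord i) jn).
rewrite (bigD1 (Ordinal jn)) //= eqxx mulr1 big1 ?addr0 ?subrr //.
by move=> i /negbTE; rewrite -val_eqE /= => ->; rewrite mulr0.
Qed.

Lemma bessel (u : nat -> H) z n :
  (forall i j, ip (u i) (u j) = (i == j)%:R) ->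
  \sum_(i < n) `|ip z (u i)| ^+ 2 <= `|z| ^+ 2.
Proof.
move=> ou; pose p := z - \sum_(i < n) ip z (u i) *: u i.
have pu := orthogonal_projection z (fun i j _ _ => ou i j).
have pp : ip p p = ip p z.
  by rewrite {2}/p ipBr ip_sumr big1 ?subr0 // => i _; rewrite ipZr pu ?mulr0.
have : 0 <= ip p p by rewrite ipxx exprn_ge0.
rewrite pp /p ipBl ip_suml ipxx subr_ge0.
by under eq_bigr => i _ do rewrite ipZl -(conjK (ip (u i) z)) -ipC mul_conj.
Qed.

Lemma ip_orthonormal_cvg0 (u : nat -> H) z :
  (forall i j, ip (u i) (u j) = (i == j)%:R) ->
  (fun i => re `|ip (u i) z| ^+ 2) @ \oo --> (0 : R).
Proof.
move=> ou; apply: cvg_series_cvg_0; apply: nondecreasing_is_cvgn.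
  by apply: nondecreasing_series => k _ _; rewrite exprn_ge0 ?renorm_ge0.
exists (rnorm z ^+ 2) => _ [n _ <-].
rewrite /series /= big_mkord -ler_emb emb_sum embX emb_rnorm.
under eq_bigr => i _ do rewrite embX emb_renorm -norm_conj -ipC.
exact: bessel.
Qed.

Lemma norm_phase_combination (c b : H) (l : K) : ip c b = 0 -> `|l| = 1 ->
  `|b| <= `|c| -> 2 * `|b| <= `|(1 - l) *: c + (1 + l) *: b|.
Proof.
move=> cb l1 bc; rewrite -ler_sqr ?nnegrE ?mulr_ge0 //.
rewrite pythagoras; last by rewrite ipZl ipZr cb !mulr0.
rewrite !normrZ !exprMn.
have bc2 : `|b| ^+ 2 <= `|c| ^+ 2 by rewrite ler_sqr ?nnegrE.
apply: (@le_trans _ _ (`|1 - l| ^+ 2 * `|b| ^+ 2 + `|1 + l| ^+ 2 * `|b| ^+ 2)).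
  by rewrite -mulrDl normB1_normD1 l1 expr1n le_eqVlt; apply/orP; left; apply/eqP; ring.
by rewrite lerD2r ler_wpM2l ?exprn_ge0.
Qed.

Hypothesis infdim : infinite_dimensional H.

Definition orthogonal_unit (s : seq H) (e : H) :=
  `|e| = 1 /\ forall i, (i < size s)%N -> ip e s`_i = 0.

Lemma exists_orthogonal_unit s : orthonormal s -> exists e, orthogonal_unit s e.
Proof.
move=> os; have [z zP] := infdim (fun i : 'I_(size s) => s`_i).
pose p := z - \sum_(i < size s) ip z s`_i *: s`_i.
have p0 : `|p| != 0.
  rewrite normr_eq0; apply/eqP => p0; apply: (zP (fun i => ip z s`_i)).
  by apply/eqP; rewrite -subr_eq0 -/p p0.
exists (`|p|^-1 *: p); split; first by rewrite normrZ ger0_norm ?invr_ge0 // mulVf.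
move=> i iL; have := @orthogonal_projection (size s) (nth 0 s) z os i iL.
by rewrite ipZl => ->; rewrite mulr0.
Qed.

Definition next_unit (s : seq H) := xget 0 (orthogonal_unit s).

Lemma next_unitP s : orthonormal s -> orthogonal_unit s (next_unit s).
Proof. by move=> /exists_orthogonal_unit/(xgetPex 0). Qed.

Fixpoint extend_orthonormal (s : seq H) n :=
  if n is n'.+1 then rcons (extend_orthonormal s n') (next_unit (extend_orthonormal s n'))
  else s.

Lemma size_extend_orthonormal s n : size (extend_orthonormal s n) = (size s + n)%N.
Proof. by elim: n => [|n IH] /=; rewrite ?addn0 // size_rcons IH addnS. Qed.

Lemma orthonormal_extend s n : orthonormal s -> orthonormal (extend_orthonormal s n).
Proof.
move=> os; elim: n => [|n IH] //=; have [e1 eL] := next_unitP IH.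
exact: orthonormal_rcons.
Qed.

Lemma nth_extend_orthonormal s n m i : (n <= m)%N ->
  (i < size (extend_orthonormal s n))%N ->
  (extend_orthonormal s m)`_i = (extend_orthonormal s n)`_i.
Proof.
elim: m => [|m IH]; first by rewrite leqn0 => /eqP ->.
rewrite leq_eqVlt => /orP[/eqP -> //|]; rewrite ltnS => nm iL /=.
rewrite nth_rcons IH // ifT // (leq_trans iL) //.
by rewrite !size_extend_orthonormal leq_add2l.
Qed.

Definition orthonormal_seq (s : seq H) n := next_unit (extend_orthonormal s n).

Lemma orthonormal_seqE s n :
  orthonormal_seq s n = (extend_orthonormal s n.+1)`_(size s + n).
Proof. by rewrite /= nth_rcons size_extend_orthonormal ltnn eqxx. Qed.

Lemma orthonormal_seq_ip s n m : orthonormal s ->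
  ip (orthonormal_seq s n) (orthonormal_seq s m) = (n == m)%:R.
Proof.
move=> os; pose k := (maxn n m).+1.
have kn : (n.+1 <= k)%N by rewrite ltnS leq_maxl.
have km : (m.+1 <= k)%N by rewrite ltnS leq_maxr.
rewrite !orthonormal_seqE -(nth_extend_orthonormal (s := s) kn); last first.
  by rewrite size_extend_orthonormal ltn_add2l.
rewrite -(nth_extend_orthonormal (s := s) km); last by rewrite size_extend_orthonormal ltn_add2l.
by rewrite (orthonormal_extend (n := k) os) ?size_extend_orthonormal ?ltn_add2l // eqn_add2l.
Qed.

Lemma orthonormal_seqP s n : orthonormal s -> orthogonal_unit s (orthonormal_seq s n).
Proof.
move=> os; have [e1 eL] := next_unitP (orthonormal_extend (n := n) os).
split=> // i iL; rewrite -(nth_extend_orthonormal (s := s) (n := 0) (m := n)) //= in eL *.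
by rewrite eL // size_extend_orthonormal ltn_addr.
Qed.

Variables (im : K -> R) (dd : measure_display) (T : measurableType dd)
  (mu : {measure set T -> \bar R}) (xt : T -> H).
Hypothesis frame : continuous_frame re im ip mu xt.
Hypothesis renorm_sqr : forall a : K, re `|a| ^+ 2 = re a ^+ 2 + im a ^+ 2.

Definition coef (z : H) (t : T) : R := re `|ip z (xt t)|.

Lemma coef_ge0 z t : 0 <= coef z t.
Proof. exact: renorm_ge0. Qed.

Lemma measurable_coef_sqr z : measurable_fun setT (fun t => coef z t ^+ 2).
Proof.
have [/(_ z) [mre mim] _] := frame.
rewrite (_ : (fun t => _) = fun t => re (ip z (xt t)) ^+ 2 + im (ip z (xt t)) ^+ 2).
  by apply: measurable_funD; apply: measurable_funX.
by apply/funext => t; rewrite /coef renorm_sqr.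
Qed.

Lemma measurable_coef z : measurable_fun setT (coef z).
Proof.
rewrite (_ : coef z = Num.sqrt \o (fun t => coef z t ^+ 2)).
  apply: measurableT_comp; last exact: measurable_coef_sqr.
  by apply: continuous_measurable_fun; exact: sqrt_continuous.
by apply/funext => t /=; rewrite sqrtr_sqr ger0_norm ?coef_ge0.
Qed.

Lemma frame_upper_bound : exists2 B : R, 0 <= B & forall z,
  (\int[mu]_t (coef z t ^+ 2)%:E <= (B * rnorm z ^+ 2)%:E)%E.
Proof.
have [_ [A [B [A0 [AB h]]]]] := frame.
by exists B => [|z]; [exact: le_trans (ltW A0) AB|have [] := h z].
Qed.

(* Frame coefficients along an orthonormal sequence tend to 0 pointwise, so by
   dominated convergence a unit vector orthogonal to [s] can be found whose
   coefficients overlap arbitrarily little with a given integrable [G]. *)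
Lemma exists_orthogonal_unit_small_overlap s (G : T -> R) (eta : R) :
  orthonormal s -> measurable_fun setT G -> (forall t, 0 <= G t) ->
  (\int[mu]_t (G t)%:E < +oo)%E -> 0 < eta ->
  exists e, orthogonal_unit s e /\
    (\int[mu]_t (Num.min (G t) (coef e t ^+ 2))%:E < eta%:E)%E.
Proof.
move=> os mG G0 iG eta0; pose u := orthonormal_seq s.
pose f n t := (Num.min (G t) (coef (u n) t ^+ 2))%:E.
have mf n : measurable_fun setT (f n).
  exact/measurable_EFinP/measurable_minr/measurable_coef_sqr.
have f0 : \forall t \ae mu, setT t -> f ^~ t @ \oo --> (0 : \bar R).
  apply: aeW => t _; apply: cvg_EFin; first exact: nearW.
  apply: (@squeeze_cvgr _ _ _ _ (cst 0) (fun n => coef (u n) t ^+ 2)).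
  - by apply: nearW => n; rewrite le_min G0 exprn_ge0 ?coef_ge0 // ge_min lexx orbT.
  - exact: cvg_cst.
  - by apply: ip_orthonormal_cvg0 => i j; exact: orthonormal_seq_ip.
have iG' : mu.-integrable setT (fun t => (G t)%:E).
  apply/integrableP; split; first exact/measurable_EFinP.
  by under eq_integral => t _ do rewrite gee0_abs ?lee_fin //.
have fG : \forall t \ae mu, forall n, setT t -> (`|f n t| <= (G t)%:E)%E.
  apply: aeW => t n _.
  by rewrite gee0_abs ?lee_fin ?le_min ?G0 ?exprn_ge0 ?coef_ge0 // ge_min lexx.
have [_ _] := dominated_convergence measurableT mf (measurable_cst 0%E) f0 iG' fG.
rewrite integral0 => /fine_cvgP[finf cvgf].
have : \forall n \near \oo, (\int[mu]_t f n t)%E \is a fin_num /\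
    `|0 - fine (\int[mu]_t f n t)%E| < eta.
  near=> n; split; [near: n; exact: finf|].
  by near: n; exact: cvgr_dist_lt.
move=> /filter_ex [n [fin_n small_n]].
exists (u n); split; first exact: orthonormal_seqP.
rewrite -(fineK fin_n) lte_fin; apply: le_lt_trans small_n.
by rewrite sub0r normrN ler_norm.
Unshelve. all: by end_near.
Qed.

Lemma ge0_le_integral_combination (f g h : T -> R) (c1 c2 : R) :
  0 <= c1 -> 0 <= c2 -> measurable_fun setT f ->
  measurable_fun setT g -> measurable_fun setT h ->
  (forall t, 0 <= f t) -> (forall t, 0 <= g t) -> (forall t, 0 <= h t) ->
  (forall t, f t <= c1 * g t + c2 * h t) ->
  (\int[mu]_t (f t)%:E <=
    c1%:E * \int[mu]_t (g t)%:E + c2%:E * \int[mu]_t (h t)%:E)%E.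
Proof.
move=> c10 c20 mf mg mh f0 g0 h0 fgh.
have mEg : measurable_fun setT (fun t => (g t)%:E) by exact/measurable_EFinP.
have mEh : measurable_fun setT (fun t => (h t)%:E) by exact/measurable_EFinP.
have Eg0 t : setT t -> (0 <= (g t)%:E)%E by rewrite lee_fin.
have Eh0 t : setT t -> (0 <= (h t)%:E)%E by rewrite lee_fin.
rewrite -ge0_integralZl ?lee_fin // -ge0_integralZl ?lee_fin //.
rewrite -ge0_integralD //; first last.
- exact: emeasurable_funM.
- by move=> t _; rewrite mule_ge0 ?lee_fin.
- exact: emeasurable_funM.
- by move=> t _; rewrite mule_ge0 ?lee_fin.
apply: ge0_le_integral => //.
- by move=> t _; rewrite lee_fin.
- exact/measurable_EFinP.
- by apply: emeasurable_funD; exact: emeasurable_funM.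
- by move=> t _; rewrite -!EFinM -EFinD lee_fin.
Qed.

Lemma Lnorm2_le_sqrt (f : T -> R) (c : R) : 0 <= c ->
  (\int[mu]_t (f t ^+ 2)%:E <= c%:E)%E ->
  (Lnorm mu 2%:E (fun t => (f t)%:E) <= (Num.sqrt c)%:E)%E.
Proof.
move=> c0 fc; rewrite Lnorm.unlock /=.
rewrite (eq_integral (fun t => (f t ^+ 2)%:E)); last first.
  by move=> t _; rewrite powR_mulrn ?normr_ge0 // real_normK // num_real.
have I0 : (0 <= \int[mu]_t (f t ^+ 2)%:E)%E.
  by apply: integral_ge0 => t _; rewrite lee_fin sqr_ge0.
have h2 : (0 : R) <= 2^-1 by rewrite invr_ge0.
have := @gt0_ler_poweR R 2^-1 h2 _ _ _ _ fc.
rewrite !in_itv /= I0 leey lee_fin c0 leey => /(_ erefl erefl).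
by rewrite powR12_sqrt.
Qed.

Lemma not_stable_pr_near (x : H) (y : nat -> H) (g : nat -> R) :
  (fun k => rnorm (y k - x)) @ \oo --> (0 : R) -> g @ \oo --> (0 : R) ->
  (forall k, ~ exists l : K, `|l| = 1 /\ y k = l *: x) ->
  (forall k, (Psi re ip mu xt x (y k) <= (g k)%:E)%E) ->
  ~ stable_pr_near re ip mu xt x.
Proof.
move=> yx g0 ny Psig [C [C0]]; rewrite /C_stable_pr_near.
set S := ereal_sup _ => S1.
suff : (S <= (2^-1)%:E)%E.
  by move=> /(le_trans S1); rewrite lee_fin; lra.
apply/ereal_supP => _ [delta d0 <-].
have Cg : (fun k => C * g k) @ \oo --> (0 : R) by rewrite -(mulr0 C); exact: cvgMr.
have [k [yk gk]] : exists k, rnorm (y k - x) < delta /\ C * g k <= 2^-1.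
  have h2 : (0 : R) < 2^-1 by rewrite invr_gt0.
  have : \forall k \near \oo, rnorm (y k - x) < delta /\ C * g k <= 2^-1.
    near=> k; split.
      apply: le_lt_trans (ler_norm _) _; rewrite -normrN -sub0r.
      by near: k; exact: cvgr_dist_lt.
    apply: le_trans (ler_norm _) _; rewrite -normrN -sub0r.
    by near: k; exact: cvgr_dist_le.
  exact: filter_ex.
apply: le_trans (ereal_inf_lbound _) _; first by exists (y k) => //; split.
apply: le_trans (lee_wpmul2l _ (Psig k)) _; first by rewrite lee_fin ltW.
by rewrite -EFinM lee_fin.
Unshelve. all: by end_near.
Qed.

Section Construction.
Variables (B : R) (x0 : H) (eps : R).
Hypothesis B_ge0 : 0 <= B.
Hypothesis frame_ub : forall z,
  (\int[mu]_t (coef z t ^+ 2)%:E <= (B * rnorm z ^+ 2)%:E)%E.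
Hypothesis eps_gt0 : 0 < eps.

Definition ratio (k : nat) : R := 2^-1 ^+ k.+1.

Fixpoint radius (k : nat) : R := if k is k'.+1 then radius k' * ratio k' else eps.

Lemma ratio_gt0 k : 0 < ratio k.
Proof. by rewrite exprn_gt0 // invr_gt0. Qed.

Lemma ratioS k : ratio k.+1 = ratio k / 2.
Proof. by rewrite /ratio exprS mulrC. Qed.

Lemma ratio_le_half k : ratio k <= 2^-1.
Proof.
rewrite /ratio exprS ler_piMr ?invr_ge0 // exprn_ile1 ?invr_ge0 //.
by rewrite invf_le1 // ler1n.
Qed.

Lemma ratio_cvg0 : ratio @ \oo --> (0 : R).
Proof.
rewrite (_ : ratio = geometric 2^-1 2^-1); last first.
  by apply/funext => k; rewrite /ratio /= exprS.
by apply: cvg_geometric; rewrite ger0_norm ?invr_ge0 // invf_lt1 // ltr1n.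
Qed.

Lemma radius_gt0 k : 0 < radius k.
Proof. by elim: k => [|k IH] //=; rewrite mulr_gt0 // ratio_gt0. Qed.

Lemma radiusS_le k : radius k.+1 <= radius k / 2.
Proof. by rewrite /= ler_pM2l ?radius_gt0 // ratio_le_half. Qed.

Lemma radius_le_geometric k : radius k <= eps * 2^-1 ^+ k.
Proof.
elim: k => [|k IH] /=; first by rewrite expr0 mulr1.
apply: le_trans (radiusS_le k) _.
by rewrite exprS mulrCA mulrC ler_wpM2l ?invr_ge0.
Qed.

Lemma radius_cvg0 : radius @ \oo --> (0 : R).
Proof.
apply: (@squeeze_cvgr _ _ _ _ (cst 0) (geometric eps 2^-1)).
- by apply: nearW => k; rewrite ltW ?radius_gt0 ?radius_le_geometric.
- exact: cvg_cst.
- by apply: cvg_geometric; rewrite ger0_norm ?invr_ge0 // invf_lt1 // ltr1n.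
Qed.

Definition initial_basis : seq H := if x0 == 0 then [::] else [:: `|x0|^-1 *: x0].

Lemma initial_basisP : orthonormal initial_basis /\
  forall e, (forall i, (i < size initial_basis)%N -> ip e initial_basis`_i = 0) ->
  ip e x0 = 0.
Proof.
rewrite /initial_basis; have [->|x00] := eqVneq x0 0.
  by split => // e _; rewrite ip0r.
have nx0 : `|x0| != 0 by rewrite normr_eq0.
split => [[|i] [|j] //= _ _|e /(_ 0%N erefl) /=].
  by rewrite ipZl ipZr ipxx conj_ge0 ?invr_ge0 // mulrA -expr2 -exprMn mulVf ?expr1n.
by rewrite ipZr => /eqP; rewrite mulf_eq0 conj_eq0 invr_eq0 (negbTE nx0) => /eqP.
Qed.

Definition good_direction (s : seq H) (w : H) (k : nat) (e : H) :=
  orthogonal_unit s e /\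
  (\int[mu]_t (Num.min (coef w t ^+ 2 / radius k ^+ 2) (coef e t ^+ 2))%:E
     < (ratio k ^+ 2)%:E)%E.

Definition next_direction s w k := xget 0 (good_direction s w k).

Lemma next_directionP s w k : orthonormal s ->
  good_direction s w k (next_direction s w k).
Proof.
move=> os; apply: (xgetPex 0).
have rk := radius_gt0 k.
apply: exists_orthogonal_unit_small_overlap => //.
- by apply: measurable_funM => //; exact: measurable_coef_sqr.
- by move=> t; rewrite divr_ge0 ?exprn_ge0 ?coef_ge0 // ltW.
- under eq_integral => t _ do rewrite mulrC EFinM.
  have mw : measurable_fun setT (fun t => (coef w t ^+ 2)%:E).
    exact/measurable_EFinP/measurable_coef_sqr.
  have w0 t : setT t -> (0 <= (coef w t ^+ 2)%:E)%E.
    by rewrite lee_fin exprn_ge0 ?coef_ge0.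
  rewrite ge0_integralZl ?lee_fin ?invr_ge0 ?exprn_ge0 ?ltW //.
  apply: le_lt_trans (lee_wpmul2l _ (frame_ub w)) _.
    by rewrite lee_fin invr_ge0 exprn_ge0 // ltW.
  by rewrite -EFinM ltry.
- by rewrite exprn_gt0 // ratio_gt0.
Qed.

Fixpoint approx (k : nat) : seq H * H :=
  if k is k'.+1 then
    let e := next_direction (approx k').1 (approx k').2 k' in
    (rcons (approx k').1 e, (approx k').2 + emb (radius k') *: e)
  else (initial_basis, x0).

Definition basis k := (approx k).1.
Definition center k := (approx k).2.
Definition dir k := next_direction (basis k) (center k) k.

Lemma basisS k : basis k.+1 = rcons (basis k) (dir k).
Proof. by []. Qed.

Lemma centerS k : center k.+1 = center k + emb (radius k) *: dir k.
Proof. by []. Qed.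

Lemma basis_orthonormal k : orthonormal (basis k) /\ forall e,
  (forall i, (i < size (basis k))%N -> ip e (basis k)`_i = 0) -> ip e (center k) = 0.
Proof.
elim: k => [|k [os ws]]; first exact: initial_basisP.
have [[e1 eL] _] := next_directionP (center k) k os.
rewrite basisS centerS; split; first exact: orthonormal_rcons.
move=> e he; rewrite ipDr ipZr ws => [|i iL]; last first.
  by have := he i; rewrite size_rcons ltnS (ltnW iL) nth_rcons iL; apply.
have := he (size (basis k)); rewrite size_rcons ltnS leqnn nth_rcons ltnn eqxx.
by move=> -> //; rewrite mulr0 addr0.
Qed.

Lemma dirP k : `|dir k| = 1 /\ ip (center k) (dir k) = 0 /\
  (\int[mu]_t (Num.min (coef (center k) t ^+ 2 / radius k ^+ 2) (coef (dir k) t ^+ 2))%:E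
     < (ratio k ^+ 2)%:E)%E.
Proof.
have [os ws] := basis_orthonormal k.
have [[e1 eL] small] := next_directionP (center k) k os.
by split; [|split; [rewrite ipC ws ?conj0|]].
Qed.

Lemma rnorm_step k : rnorm (emb (radius k) *: dir k) = radius k.
Proof.
have [e1 _] := dirP k.
by rewrite rnormZ renorm_emb /rnorm e1 -emb1 embK mulr1 ger0_norm // ltW ?radius_gt0.
Qed.

Lemma center_cauchy m n : (m <= n)%N -> rnorm (center n - center m) <= 2 * (radius m - radius n).
Proof.
elim: n => [|n IH]; first by rewrite leqn0 => /eqP ->; rewrite !subrr rnorm0 mulr0.
rewrite leq_eqVlt => /orP[/eqP ->|]; first by rewrite !subrr rnorm0 mulr0.
rewrite ltnS => mn; rewrite centerS addrAC (le_trans (rnormD _ _)) // rnorm_step.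
by have := radiusS_le n; have := IH mn; lra.
Qed.

Lemma center_cvg : cvgn center.
Proof.
apply: cauchy_cvg; apply: cauchy_exP => e e0.
have re0 : 0 < re e by rewrite -emb_gt0 re_ge0K // ltW.
have [M _ HM] := cvgr_dist_lt _ _ radius_cvg0 _ (divr_gt0 re0 (ltr0n _ 2)).
exists (center M); suff : \forall n \near \oo, ball (center M) e (center n) by [].
near=> n.
rewrite -ball_normE /ball_ /= distrC -(re_ge0K (ltW e0)) -emb_rnorm ltr_emb.
apply: (le_lt_trans (center_cauchy (_ : M <= n)%N)); first by near: n; exists M.
have := HM M (leqnn M); rewrite sub0r normrN ger0_norm ?ltW ?radius_gt0 //.
by have := radius_gt0 n; lra.
Unshelve. all: by end_near.
Qed.

Definition xstar := lim (center @ \oo).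

Lemma rnorm_xstar_center m : rnorm (xstar - center m) <= 2 * radius m.
Proof.
apply/ler_addgt0Pr => r r0.
have er : 0 < emb r by rewrite emb_gt0.
have [M _ HM] := cvgr_dist_lt _ _ center_cvg _ er.
pose n := maxn M m.
have : rnorm (xstar - center n) < r.
  by rewrite -ltr_emb emb_rnorm; apply: HM; exact: leq_maxl.
have := rnormD (xstar - center n) (center n - center m); rewrite addrA subrK.
have := center_cauchy (leq_maxr M m); have := radius_gt0 n; lra.
Qed.

(* [xstar] and [witness k] are [base k +/- bump k]: they are [radius k.+1]
   apart even up to a phase, yet their frame moduli differ by at most twice
   the small overlap of [base k] and [bump k]. *)
Definition bump k := emb (radius k.+1) *: dir k.+1.
Definition tail k := xstar - center k.+2.
Definition base k := center k.+1 + tail k.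
Definition witness k := base k - bump k.

Lemma xstarE k : xstar = base k + bump k.
Proof. by rewrite /base /tail /bump centerS addrAC addrC subrK. Qed.

Lemma norm_bump k : `|bump k| = emb (radius k.+1).
Proof.
have [e1 _] := dirP k.+1.
by rewrite /bump normrZ e1 mulr1 -emb_norm ger0_norm // ltW ?radius_gt0.
Qed.

Lemma radius_le_norm_center k : emb (radius k.+1) <= `|center k.+1|.
Proof.
have [e1 [ce _]] := dirP k.
have r0 j : 0 <= emb (radius j) by rewrite emb_ge0 ltW ?radius_gt0.
have := @pythagoras (center k) (emb (radius k) *: dir k).
rewrite ipZr ce mulr0 -centerS normrZ e1 mulr1 -emb_norm (ger0_norm (ltW (radius_gt0 k))).
move=> /(_ erefl) py.
rewrite -ler_sqr ?nnegrE ?r0 // py.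
apply: (@le_trans _ _ (emb (radius k) ^+ 2)); last by rewrite lerDr exprn_ge0.
rewrite ler_sqr ?nnegrE ?r0 // ler_emb.
by have := radiusS_le k; have := radius_gt0 k; lra.
Qed.

Lemma ratio_le_quarter k : 4 * ratio k.+1 <= 1.
Proof. by rewrite ratioS; have := ratio_le_half k; lra. Qed.

Lemma radius_le_dist_witness k (l : K) : `|l| = 1 ->
  radius k.+1 <= rnorm (xstar - l *: witness k).
Proof.
move=> l1; set c := center k.+1; set b := bump k; set t := tail k.
have -> : xstar - l *: witness k = ((1 - l) *: c + (1 + l) *: b) + (1 - l) *: t.
  by rewrite (xstarE k) /witness /base addB_scaleB scalerDr addrAC.
set P := _ + _ *: b.
have hP : 2 * radius k.+1 <= rnorm P.
  rewrite -ler_emb emb_rnorm embM -[2%R]/(1 + 1)%R embD emb1 -norm_bump.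
  apply: norm_phase_combination => //; last by rewrite norm_bump radius_le_norm_center.
  by rewrite /b /bump ipZr (proj1 (proj2 (dirP k.+1))) mulr0.
have ht : rnorm ((1 - l) *: t) <= radius k.+1.
  rewrite rnormZ.
  have l2 : re `|1 - l| <= 2.
    by have := renormD 1 (- l); rewrite normrN renorm1 l1 -emb1 embK.
  have tk : rnorm t <= 2 * (radius k.+1 * ratio k.+1) := rnorm_xstar_center k.+2.
  have := ratio_le_quarter k; have := radius_gt0 k.+1 => r0 q.
  apply: le_trans (ler_pM (renorm_ge0 _) (rnorm_ge0 t) l2 tk) _; nra.
have := rnormB (P + (1 - l) *: t) ((1 - l) *: t); rewrite addrK; lra.
Qed.

Definition overlap k t :=
  Num.min (coef (center k) t ^+ 2 / radius k ^+ 2) (coef (dir k) t ^+ 2).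

Lemma overlap_ge0 k t : 0 <= overlap k t.
Proof.
by rewrite le_min divr_ge0 ?exprn_ge0 ?coef_ge0 // ltW ?radius_gt0.
Qed.

Lemma measurable_overlap k : measurable_fun setT (overlap k).
Proof.
apply: measurable_minr; last exact: measurable_coef_sqr.
by apply: measurable_funM => //; exact: measurable_coef_sqr.
Qed.

Lemma coef_xstar_witness_sqr k t : (coef xstar t - coef (witness k) t) ^+ 2 <=
  8 * radius k.+1 ^+ 2 * overlap k.+1 t + 8 * coef (tail k) t ^+ 2.
Proof.
have a0 := radius_gt0 k.+1.
rewrite -mulrA.
have -> : radius k.+1 ^+ 2 * overlap k.+1 t =
    Num.min (coef (center k.+1) t) (radius k.+1 * coef (dir k.+1) t) ^+ 2.
  rewrite /overlap minr_pMr ?exprn_ge0 ?ltW // mulrC divfK ?expf_neq0 ?gt_eqF //.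
  by rewrite (min_sqr (coef_ge0 _ _) (mulr_ge0 (ltW a0) (coef_ge0 _ _))) -exprMn.
set m := Num.min (coef (center k.+1) t) (radius k.+1 * coef (dir k.+1) t).
have hb : coef (bump k) t = radius k.+1 * coef (dir k.+1) t.
  by rewrite /coef /bump ipZl renormM renorm_emb ger0_norm // ltW.
have hmin : Num.min (coef (base k) t) (coef (bump k) t) <= m + coef (tail k) t.
  have hW : coef (base k) t <= coef (center k.+1) t + coef (tail k) t.
    by rewrite /coef /base ipDl renormD.
  rewrite hb ge_min /m.
  by have [_|_] := leP (coef (center k.+1) t) (radius k.+1 * coef (dir k.+1) t);
    rewrite ?hW // lerDl coef_ge0 orbT.
have m0 : 0 <= m by rewrite le_min coef_ge0 mulr_ge0 ?coef_ge0 ?ltW.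
have := renorm_addB_le_min (ip (base k) (xt t)) (ip (bump k) (xt t)).
rewrite -ipDl -ipBl -(xstarE k) -/(coef xstar t) -/(coef (witness k) t).
rewrite -/(coef _ t) -/(coef _ t) ler_norml => /andP[h1 h2].
have r0 := coef_ge0 (tail k) t.
set d := coef xstar t - _ in h1 h2 *; set r := coef (tail k) t in hmin r0 *.
have := sqr_ge0 (m - r); nra.
Qed.

Definition gap_const := 8 * (1 + 4 * B).

Lemma integral_gap_sqr k : (\int[mu]_t ((coef xstar t - coef (witness k) t) ^+ 2)%:E <=
  (gap_const * (radius k.+1 * ratio k.+1) ^+ 2)%:E)%E.
Proof.
have a0 := radius_gt0 k.+1.
apply: le_trans (ge0_le_integral_combination _ _ _ _ _ _ _ _ (coef_xstar_witness_sqr k)) _.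
- by rewrite mulr_ge0 ?exprn_ge0 // ltW.
- by [].
- by apply/measurable_funX/measurable_funB; exact: measurable_coef.
- exact: measurable_overlap.
- exact: measurable_coef_sqr.
- by move=> t; rewrite sqr_ge0.
- exact: overlap_ge0.
- by move=> t; rewrite exprn_ge0 ?coef_ge0.
have [_ [_ small]] := dirP k.+1.
have tail_sqr : rnorm (tail k) ^+ 2 <= (2 * (radius k.+1 * ratio k.+1)) ^+ 2.
  have ar : 0 <= 2 * (radius k.+1 * ratio k.+1).
    by rewrite mulr_ge0 // mulr_ge0 // ltW // ratio_gt0.
  by rewrite ler_sqr ?nnegrE ?rnorm_ge0 //; exact: rnorm_xstar_center.
apply: le_trans (leeD (lee_wpmul2l _ (ltW small)) (lee_wpmul2l _ (frame_ub (tail k)))) _.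
- by rewrite lee_fin mulr_ge0 ?exprn_ge0 // ltW.
- by rewrite lee_fin.
rewrite -!EFinM -EFinD lee_fin /gap_const.
have := ler_wpM2l B_ge0 tail_sqr; nra.
Qed.

Lemma Lnorm_gap k :
  (Lnorm mu 2%:E (fun t => (coef xstar t - coef (witness k) t)%:E) <=
   (Num.sqrt gap_const * (radius k.+1 * ratio k.+1))%:E)%E.
Proof.
have u0 : 0 <= radius k.+1 * ratio k.+1 by rewrite mulr_ge0 // ltW ?radius_gt0 ?ratio_gt0.
have c0 : 0 <= gap_const by rewrite /gap_const mulr_ge0 // addr_ge0 // mulr_ge0.
rewrite -(ger0_norm u0) -sqrtr_sqr -sqrtrM //.
by apply: Lnorm2_le_sqrt; [rewrite mulr_ge0 ?sqr_ge0|exact: integral_gap_sqr].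
Qed.

Lemma radius_le_phase_dist k : radius k.+1 <= phase_dist re xstar (witness k).
Proof.
apply: lb_le_inf; first by exists (re `|xstar - 1 *: witness k|); exists 1 => //; exact: normr1.
by move=> _ [l l1 <-]; exact: radius_le_dist_witness.
Qed.

Lemma witness_not_phase_multiple k : ~ exists l : K, `|l| = 1 /\ witness k = l *: xstar.
Proof.
move=> [l [l1 wl]].
have l0 : l != 0 by rewrite -normr_eq0 l1 oner_eq0.
have := @radius_le_dist_witness k l^-1; rewrite normfV l1 invr1 => /(_ erefl).
by rewrite wl scalerA mulVf // scale1r subrr rnorm0 leNgt radius_gt0.
Qed.

Lemma rnorm_witness_xstar k : rnorm (witness k - xstar) <= 2 * radius k.+1.
Proof.
rewrite (xstarE k) /witness opprD addrACA subrr add0r.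
have := rnormD (- bump k) (- bump k); rewrite rnormN /rnorm norm_bump embK; lra.
Qed.

Lemma Psi_witness_le k :
  (Psi re ip mu xt xstar (witness k) <= (Num.sqrt gap_const * ratio k.+1)%:E)%E.
Proof.
have a0 := radius_gt0 k.+1; have pd := radius_le_phase_dist k.
have pd0 : 0 < phase_dist re xstar (witness k) by exact: lt_le_trans pd.
have inv_le : ((phase_dist re xstar (witness k))^-1%:E <= (radius k.+1)^-1%:E)%E.
  by rewrite lee_fin lef_pV2 ?posrE.
have inv0 : (0 <= ((phase_dist re xstar (witness k))^-1)%:E)%E.
  by rewrite lee_fin invr_ge0 ltW.
apply: le_trans (lee_pmul (Lnorm_ge0 _ _ _) inv0 (Lnorm_gap k) inv_le) _.
by rewrite -EFinM lee_fin le_eqVlt; apply/orP; left; apply/eqP; field; rewrite gt_eqF.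
Qed.

Lemma xstar_not_stable : ~ stable_pr_near re ip mu xt xstar.
Proof.
apply: (not_stable_pr_near (y := witness) (g := fun k => Num.sqrt gap_const * ratio k.+1)).
- apply: (@squeeze_cvgr _ _ _ _ (cst 0) (fun k => 2 * radius k.+1)).
  + by apply: nearW => k; rewrite rnorm_ge0 rnorm_witness_xstar.
  + exact: cvg_cst.
  + rewrite -(mulr0 2); apply: cvgMr.
    by have := radius_cvg0; rewrite -cvg_shiftS.
- rewrite -(mulr0 (Num.sqrt gap_const)); apply: cvgMr.
  by have := ratio_cvg0; rewrite -cvg_shiftS.
- exact: witness_not_phase_multiple.
- exact: Psi_witness_le.
Qed.

End Construction.

Lemma exists_not_stable_near (x0 : H) (eps : R) : 0 < eps ->
  exists2 x, rnorm (x - x0) < eps & ~ stable_pr_near re ip mu xt x.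
Proof.
move=> eps0; have [B B0 HB] := frame_upper_bound.
have eps4 : 0 < eps / 4 by rewrite divr_gt0.
exists (xstar x0 (eps / 4)); last exact: xstar_not_stable B0 HB eps4.
have := rnorm_xstar_center x0 HB eps4 0; rewrite /= /center /=; lra.
Qed.

Lemma not_stable_pr_dense :
  dense [set x : H | ~ stable_pr_near re ip mu xt x].
Proof.
move=> O [x0 Ox0] /[dup] oO; rewrite openE => /(_ x0 Ox0) /nbhs_ballP [e e0 be].
have re0 : 0 < re e by rewrite -emb_gt0 re_ge0K // ltW.
have [x hx nx] := exists_not_stable_near x0 re0.
exists x; split => //; apply: be.
by rewrite -ball_normE /ball_ /= distrC -(re_ge0K (ltW e0)) -emb_rnorm ltr_emb.
Qed.

End ScalarField.

Lemma phase_retrieval_unstable_dense (R : realType) (K : numFieldType) (conj : K -> K)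
  (re im : K -> R) (emb : R -> K)
  (conjD : forall a b : K, conj (a + b) = conj a + conj b)
  (conjM : forall a b : K, conj (a * b) = conj a * conj b)
  (conjK : forall a : K, conj (conj a) = a)
  (conj1 : conj 1 = 1)
  (mul_conj : forall a : K, a * conj a = `|a| ^+ 2)
  (embD : forall r s : R, emb (r + s) = emb r + emb s)
  (embM : forall r s : R, emb (r * s) = emb r * emb s)
  (emb1 : emb 1 = 1)
  (embK : forall r : R, re (emb r) = r)
  (re_ge0K : forall a : K, 0 <= a -> emb (re a) = a)
  (ler_emb : forall r s : R, (emb r <= emb s) = (r <= s))
  (renorm_sqr : forall a : K, re `|a| ^+ 2 = re a ^+ 2 + im a ^+ 2)
  (H : completeNormedModType K) (ip : H -> H -> K)
  (d : measure_display) (T : measurableType d)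
  (mu : {measure set T -> \bar R}) (xt : T -> H) :
  is_inner_product conj ip -> infinite_dimensional H ->
  continuous_frame re im ip mu xt ->
  (exists x : H, ~ stable_pr_near re ip mu xt x) /\
  dense [set x : H | ~ stable_pr_near re ip mu xt x].
Proof.
move=> ip_inner infdim frame.
have dns := not_stable_pr_dense conjD conjM conjK conj1 mul_conj embD embM emb1 embK
  re_ge0K ler_emb ip_inner infdim frame renorm_sqr.
split=> //; have [x [_ ?]] := dns setT (ex_intro _ 0 I) openT.
by exists x.
Qed.

Theorem theorem5p2 (R : realType) :
  (* real Hilbert spaces *)
  (forall (H : completeNormedModType R) (ip : H -> H -> R)
          (d : measure_display) (T : measurableType d)
          (mu : {measure set T -> \bar R}) (xt : T -> H),
     is_inner_product id ip ->
     infinite_dimensional H ->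
     continuous_frame id (fun _ => 0) ip mu xt ->
     (exists x : H, ~ stable_pr_near id ip mu xt x) /\
     dense [set x : H | ~ stable_pr_near id ip mu xt x])
  /\
  (* complex Hilbert spaces *)
  (forall (H : completeNormedModType R[i]) (ip : H -> H -> R[i])
          (d : measure_display) (T : measurableType d)
          (mu : {measure set T -> \bar R}) (xt : T -> H),
     is_inner_product (fun z : R[i] => Num.conj z) ip ->
     infinite_dimensional H ->
     continuous_frame (@complex.Re R) (@complex.Im R) ip mu xt ->
     (exists x : H, ~ stable_pr_near (@complex.Re R) ip mu xt x) /\
     dense [set x : H | ~ stable_pr_near (@complex.Re R) ip mu xt x]).
Proof.
split=> H ip d T mu xt.
- apply: (@phase_retrieval_unstable_dense R R id id (fun _ => 0) id) => //.
  + by move=> a; rewrite /= real_normK ?num_real // expr2.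
  + by move=> a; rewrite real_normK ?num_real // expr0n /= addr0.
- apply: (@phase_retrieval_unstable_dense R R[i] (fun z => Num.conj z)
    (@complex.Re R) (@complex.Im R) (fun r => r%:C%C)) => //.
  + exact: rmorphD.
  + exact: rmorphM.
  + exact: conjCK.
  + exact: rmorph1.
  + by move=> a; rewrite normCK.
  + exact: rmorphD.
  + exact: rmorphM.
  + by case=> x y /ger0_Im /= ->.
  + exact: lecR.
  + by move=> a; rewrite normc_def /= sqr_sqrtr // addr_ge0 // sqr_ge0.
Qed.
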